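(* Consider the multivariate multiple linear regression model $\mathbf{Y} = \mathbf{X}\boldsymbol{\beta}' + \boldsymbol{\mathcal{E}}$ with $K=2$ traits, where $\mathbf{Y}$ is an $n\times 2$ matrix of traits, $\mathbf{X}$ is an $n\times1$ genotype vector, $\boldsymbol{\beta}'=(\beta_1,\beta_2)$, and $\mathrm{vec}(\boldsymbol{\mathcal{E}})\sim N_{2n}(\mathbf{0},\mathbf{I}_n\otimes\boldsymbol{\Sigma})$ with $\boldsymbol{\Sigma}=\sigma^2\big((1-\rho)\mathbf{I}_2+\rho\mathbf{1}\mathbf{1}'\big)$, $\sigma^2>0$, $\rho$ such that $\boldsymbol{\Sigma}$ is positive definite. Assume the genetic effects of associated traits are equal in size, i.e. $|\beta_1|=|\beta_2|$ when both traits are associated. Then, asymptotically, the power of the MANOVA test of $H_0:\beta_1=\beta_2=0$ under $H_{a1}:\beta_1>0,\ \beta_2=0$ exceeds its power under (i) $H_{a2,1}:\beta_1=\beta_2>0$ when $\rho>1/2$; and (ii) $H_{a2,2}:\beta_1=-\beta_2>0$ when $\rho<-1/2$.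
   Context: $\mathbf{Y}$ and $\mathbf{X}$ are centered. The MANOVA test (Wilks' lambda, equivalent to the likelihood ratio test under the model) of $H_0:\boldsymbol{\beta}=\mathbf{0}$ uses the statistic $-n\log\big(|\mathbf{E}|/|\mathbf{H}+\mathbf{E}|\big)$, where $\hat{\boldsymbol{\beta}}=\mathbf{Y}'\mathbf{X}(\mathbf{X}'\mathbf{X})^{-1}$, $\mathbf{H}=\hat{\boldsymbol{\beta}}(\mathbf{X}'\mathbf{X})\hat{\boldsymbol{\beta}}'$ and $\mathbf{E}=\mathbf{Y}'\mathbf{Y}-\hat{\boldsymbol{\beta}}(\mathbf{X}'\mathbf{X})\hat{\boldsymbol{\beta}}'$; under $H_0$ it is approximately $\chi^2_2$ for large $n$, and the test rejects for large values. ''Asymptotically'' refers to the large-sample ($n\to\infty$) approximation of the power. The value of $\beta_1$ is the same under the compared alternatives. *)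

From HB Require Import structures.
From mathcomp Require Import all_boot all_order all_algebra.
From mathcomp Require Import all_classical all_reals all_analysis.
Set Implicit Arguments. Unset Strict Implicit. Unset Printing Implicit Defensive.
Import Order.TTheory GRing.Theory Num.Theory.
Local Open Scope ring_scope.

Definition Sigma (R : realType) (sigma2 rho : R) : 'M[R]_2 :=
  sigma2 *: ((1 - rho) *: 1%:M + rho *: const_mx 1).

Definition posdef (R : realType) (k : nat) (A : 'M[R]_k) : Prop :=
  A^T = A /\ forall v : 'cV[R]_k, v != 0 -> 0 < (v^T *m A *m v) 0 0.

Definition beta2 (R : realType) (b1 b2 : R) : 'cV[R]_2 :=
  \col_i (if i == ord0 then b1 else b2).

(* Noncentrality parameter of the asymptotic chi^2_2 distribution of the
   MANOVA / LRT statistic -n log(|E|/|H+E|) under the alternative beta: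
   lambda = (X'X) * beta' Sigma^{-1} beta. *)
Definition ncp (R : realType) (n : nat) (X : 'cV[R]_n) (S : 'M[R]_2)
    (beta : 'cV[R]_2) : R :=
  (X^T *m X) 0 0 * (beta^T *m invmx S *m beta) 0 0.

Definition phi (R : realType) (x : R) : R :=
  expR (- (x ^+ 2) / 2) / Num.sqrt (pi *+ 2).

(* Upper tail P(chi^2_2(lambda) > c) of the noncentral chi-square
   distribution with 2 degrees of freedom and noncentrality lambda,
   i.e. P((Z1 + sqrt lambda)^2 + Z2^2 > c) for independent standard
   normals Z1, Z2 (written as an iterated Lebesgue integral). *)
Definition ncchi2_2_tail (R : realType) (lambda c : R) : \bar R :=
  let A (x : R) := [set y : R | (c < (x + Num.sqrt lambda) ^+ 2 + y ^+ 2)%R]%classic in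
  (\int[@lebesgue_measure R]_(x in [set: R])
     ((phi x)%:E * \int[@lebesgue_measure R]_(y in A x) (phi y)%:E))%E.

(* Asymptotic power of the level-alpha MANOVA test with critical value c
   (the upper-alpha quantile of chi^2_2) against an alternative with
   noncentrality lambda. *)
Definition asym_power (R : realType) (c lambda : R) : \bar R :=
  ncchi2_2_tail lambda c.

(* The asymptotic power is the upper tail of a noncentral chi^2_2, which is
   strictly increasing in the noncentrality lambda: conditionally on the
   second coordinate y, the event says that a unit normal with mean
   sqrt lambda avoids a fixed window centred at 0, and the mass of that
   window shrinks as the mean moves away from 0, strictly when |y| < sqrt c,
   i.e. on a set of positive measure.  For beta = (u, v) the noncentrality is
   (X'X) (u^2 + v^2 - 2 rho u v) / (sigma^2 (1 - rho^2)); this is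
   (X'X) b^2 / (sigma^2 (1 - rho^2)) for (b, 0) and
   2 (X'X) b^2 / (sigma^2 (1 +- rho)) for (b, +-b), and the former is larger
   exactly when +-rho > 1/2. *)
From HB Require Import structures.
From mathcomp Require Import all_boot all_order all_algebra.
From mathcomp Require Import all_classical all_reals all_analysis.
From mathcomp Require Import measurable_realfun ring lra.
Import Order.TTheory GRing.Theory Num.Theory.
Import numFieldNormedType.Exports.
Local Open Scope classical_set_scope.
Local Open Scope ring_scope.

Lemma measurable_gt_set d (T : measurableType d) (R : realType)
    (f : T -> R) (c : R) :
  measurable_fun setT f -> measurable [set t | c < f t].
Proof.
move=> mf; rewrite -preimage_itvoy -[_ @^-1` _]setTI.
exact: mf measurableT _ (measurable_itv _).
Qed.

Section noncentral_chi2_tail.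
Context {R : realType}.
Notation mu := (@lebesgue_measure R).

Lemma integral_gt0_itv (f : R -> R) (a b : R) : measurable_fun setT f ->
  (forall x, 0 <= f x) -> a < b -> (forall x, a < x < b -> 0 < f x) ->
  (0 < \int[mu]_x (f x)%:E)%E.
Proof.
move=> mf f0 ab fab; rewrite lt_neqAle integral_ge0 ?andbT; last first.
  by move=> x _; rewrite lee_fin.
apply/negP => /eqP/esym int0.
have abs0 : (\int[mu]_x `|(f x)%:E| = 0)%E.
  by rewrite -int0; apply: eq_integral => x _; rewrite gee0_abs ?lee_fin.
have mfE : measurable_fun setT (EFin \o f) by apply/measurable_EFinP.
have [N [mN N0 fN]] := (ae_eq_integral_abs mu measurableT mfE).1 abs0.
have abN : `]a, b[ `<=` N.
  move=> x; rewrite /= in_itv /= => xab; apply: fN => /= /(_ I) /eqP.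
  by rewrite eqe; have := fab x xab; lra.
have := etrans (esym (lebesgue_measure_itv `]a, b[))
  (@subset_measure0 _ _ _ mu _ _ (measurable_itv _) mN abN N0).
by rewrite /= lte_fin ab => /eqP; rewrite eqe; lra.
Qed.

Lemma phiE : @phi R = normal_pdf 0 1.
Proof.
apply/funext => x; rewrite /phi normal_pdfE ?oner_neq0 // /normal_peak.
by rewrite /normal_fun subr0 expr1n mul1r mulrC.
Qed.

Lemma phi_gt0 (x : R) : 0 < phi x.
Proof.
by rewrite /phi divr_gt0 ?expR_gt0 // sqrtr_gt0 pmulrn_lgt0 // pi_gt0.
Qed.

Lemma phi_ge0 (x : R) : 0 <= phi x.
Proof. exact/ltW/phi_gt0. Qed.

Lemma phi_lt_sqr (x y : R) : x ^+ 2 < y ^+ 2 -> phi y < phi x.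
Proof.
move=> xy; rewrite /phi ltr_pM2r; last first.
  by rewrite invr_gt0 sqrtr_gt0 pmulrn_lgt0 // pi_gt0.
by rewrite ltr_expR ltr_pM2r ?invr_gt0 // ltrN2.
Qed.

Lemma continuous_phi : continuous (@phi R).
Proof. by rewrite phiE; exact: continuous_normal_pdf. Qed.

Lemma measurable_phi : measurable_fun setT (@phi R).
Proof. by rewrite phiE; exact: measurable_normal_pdf. Qed.

Lemma integrable_phi (A : set R) :
  measurable A -> mu.-integrable A (EFin \o @phi R).
Proof.
move=> mA; apply: (integrableS measurableT) => //.
by rewrite phiE; exact: integrable_normal_pdf.
Qed.

Lemma integral_phi : (\int[mu]_x (phi x)%:E = 1)%E.
Proof. by rewrite phiE; exact: integral_normal_pdf. Qed.

Lemma Rintegral_phiE (A : set R) : measurable A ->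
  (\int[mu]_(x in A) (phi x)%:E)%E = (\int[mu]_(x in A) phi x)%:E.
Proof.
by move=> mA; rewrite fineK // integrable_fin_num //; exact: integrable_phi.
Qed.

Definition Phi (t : R) := \int[mu]_(x in `]-oo, t]) phi x.

Lemma Phi_ge0 (t : R) : 0 <= Phi t.
Proof. by apply: Rintegral_ge0 => x _; exact: phi_ge0. Qed.

Lemma Phi_le1 (t : R) : Phi t <= 1.
Proof.
rewrite -[1]/(fine 1%E) -integral_phi /Phi /Rintegral fine_le //.
- by rewrite integrable_fin_num //; exact: integrable_phi.
- by rewrite integral_phi.
apply: ge0_subset_integral => //.
- by apply/measurable_EFinP; exact: measurable_phi.
- by move=> x _; rewrite lee_fin phi_ge0.
Qed.

Lemma is_derive_Phi (t : R) : is_derive t 1 Phi (phi t).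
Proof.
have [dPhi <-] : derivable Phi t 1 /\ (Phi^`())%classic t = phi t.
  apply: (@continuous_FTC1 _ _ _ _ (t + 1)); rewrite ?ltrDl ?ltNyr //.
  - exact: integrable_phi.
  - exact: continuous_phi.
by rewrite derive1E; exact: derivableP.
Qed.

Lemma continuous_Phi : continuous Phi.
Proof.
move=> t; apply: differentiable_continuous; apply/derivable1_diffP.
exact: (@ex_derive _ _ _ _ _ _ _ (is_derive_Phi t)).
Qed.

Lemma Rintegral_phi_lt (t : R) : \int[mu]_(x in `]-oo, t[) phi x = Phi t.
Proof. by rewrite Rintegral_itv_bndo_bndc //; exact: integrable_phi. Qed.

Lemma Rintegral_phi_gt (t : R) : \int[mu]_(x in `]t, +oo[) phi x = 1 - Phi t.
Proof.
rewrite -[1]/(fine 1%E) -integral_phi -set_itvNyy /Phi Rintegral_itvB //.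
by rewrite set_itvNyy; exact: integrable_phi.
Qed.

Definition window (s u : R) := Phi (u + s) - Phi (u - s).

Lemma window0 (u : R) : window 0 u = 0.
Proof. by rewrite /window addr0 subr0 subrr. Qed.

Lemma window_le1 (s u : R) : window s u <= 1.
Proof.
by rewrite /window; have := Phi_le1 (u + s); have := Phi_ge0 (u - s); lra.
Qed.

Lemma is_derive_window (s u : R) :
  is_derive u 1 (window s) (phi (u + s) - phi (u - s)).
Proof.
have shift a : is_derive u 1 (fun v : R => v + a) 1.
  by have := is_deriveD (is_derive_id u 1) (is_derive_cst a u 1); rewrite addr0.
have comp a :=
  @is_derive1_comp _ _ (+%R^~ a) u _ _ (is_derive_Phi (u + a)) (shift a).
have := is_deriveB (comp s) (comp (- s)).
by rewrite !mulr1.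
Qed.

Lemma window_lt (s a b : R) :
  0 < s -> a < b -> b <= 0 -> window s a < window s b.
Proof.
move=> s0 ab b0; have dw x := @ex_derive _ _ _ _ _ _ _ (is_derive_window s x).
apply: (@gtr0_derive1_lt_cc _ (window s) a b) => //;
  rewrite ?in_itv /= ?lexx ?ltW //.
- move=> x; rewrite in_itv /= => /andP[ax xb].
  rewrite derive1E (@derive_val _ _ _ _ _ _ _ (is_derive_window s x)) subr_gt0.
  by apply: phi_lt_sqr; nra.
- by apply: derivable_within_continuous => x _; exact: dw.
Qed.

Lemma sqr_shift_gt_set (m s : R) : 0 <= s ->
  [set x | s ^+ 2 < (x + m) ^+ 2] = `]-oo, - m - s[ `|` `]- m + s, +oo[.
Proof.
move=> s0; apply/seteqP; split => x /=; rewrite !in_itv /= andbT.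
- move=> xms; have [|xs] := ltP x (- m - s); first by left.
  right; rewrite ltNge; apply/negP => xs'.
  have : (x + m - s) * (x + m + s) <= 0 by rewrite mulr_le0_ge0 //; lra.
  by nra.
- by case=> xs; nra.
Qed.

Definition cond_tail (c m y : R) := 1 - window (Num.sqrt (c - y ^+ 2)) (- m).

Lemma integral_phi_cond_tail (c m y : R) :
  (\int[mu]_(x in [set x | (c < (x + m) ^+ 2 + y ^+ 2)%R]) (phi x)%:E)%E =
  (cond_tail c m y)%:E.
Proof.
rewrite /cond_tail /window; have [cy|yc] := ltP (c - y ^+ 2) 0.
  rewrite ltr0_sqrtr // addr0 subr0 subrr subr0 -integral_phi.
  congr integral; apply/seteqP; split => x // _ /=.
  by have := sqr_ge0 (x + m); lra.
set s := Num.sqrt (c - y ^+ 2).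
have s2 : s ^+ 2 = c - y ^+ 2 by rewrite sqr_sqrtr.
have -> : [set x | c < (x + m) ^+ 2 + y ^+ 2] = [set x | s ^+ 2 < (x + m) ^+ 2].
  by apply/seteqP; split => x /=; rewrite s2; lra.
rewrite sqr_shift_gt_set ?sqrtr_ge0 // ge0_integral_setU //.
- rewrite !Rintegral_phiE // Rintegral_phi_lt Rintegral_phi_gt -EFinD.
  by congr EFin; rewrite [- m + s]addrC [- m - s]addrC; lra.
- by apply/measurable_EFinP; apply: measurable_funTS; exact: measurable_phi.
- by move=> x _; rewrite lee_fin phi_ge0.
- rewrite disj_set2E; apply/eqP/seteqP; split => x //=.
  by rewrite !in_itv /= andbT => -[xl xr]; have : 0 <= s := sqrtr_ge0 _; lra.
Qed.

Lemma cond_tail_ge0 (c m y : R) : 0 <= cond_tail c m y.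
Proof. by rewrite /cond_tail subr_ge0 window_le1. Qed.

Lemma cond_tail_le2 (c m y : R) : cond_tail c m y <= 2.
Proof.
rewrite /cond_tail /window; set s := Num.sqrt _.
by have := Phi_le1 (- m - s); have := Phi_ge0 (- m + s); lra.
Qed.

Lemma cond_tail_nonpos (c m y : R) : c <= 0 -> cond_tail c m y = 1.
Proof.
move=> c0; rewrite /cond_tail ler0_sqrtr ?window0 ?subr0 //.
by have := sqr_ge0 y; lra.
Qed.

Lemma cond_tail_le (c m m' y : R) : 0 <= m -> m < m' ->
  cond_tail c m y <= cond_tail c m' y.
Proof.
move=> m0 mm'; rewrite /cond_tail lerD2l lerN2.
have [->|s0] := eqVneq (Num.sqrt (c - y ^+ 2)) 0; first by rewrite !window0.
apply/ltW/window_lt; rewrite ?ltrN2 ?oppr_le0 //.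
by rewrite lt_neqAle eq_sym s0 sqrtr_ge0.
Qed.

Lemma cond_tail_lt (c m m' y : R) : 0 <= m -> m < m' -> y ^+ 2 < c ->
  cond_tail c m y < cond_tail c m' y.
Proof.
move=> m0 mm' yc; rewrite /cond_tail ltrD2l ltrN2.
by apply/window_lt; rewrite ?ltrN2 ?oppr_le0 ?sqrtr_gt0 ?subr_gt0.
Qed.

Lemma measurable_cond_tail (c m : R) : measurable_fun setT (cond_tail c m).
Proof.
have msqrt : measurable_fun setT (fun y : R => Num.sqrt (c - y ^+ 2)).
  apply: measurableT_comp (measurable_funB _ _) => //.
  exact: continuous_measurable_fun (@sqrt_continuous R).
have mPhi (q : R -> R) : measurable_fun setT q ->
    measurable_fun setT (fun y => Phi (- m + q y)).
  move=> mq; apply: measurableT_comp (measurable_funD _ mq) => //.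
  exact: continuous_measurable_fun continuous_Phi.
apply: measurable_funB => //; apply: measurable_funB; first exact: mPhi.
by apply: mPhi; exact: measurable_funN.
Qed.

Lemma integral_scale_phi_indic (A : set R) (k : R) : measurable A -> 0 <= k ->
  (\int[mu]_y (k * phi y * \1_A y)%:E = k%:E * \int[mu]_(y in A) (phi y)%:E)%E.
Proof.
move=> mA k0; rewrite [in RHS]integral_mkcond -ge0_integralZl_EFin //.
- apply: eq_integral => y _; rewrite /patch indicE.
  by case: ifPn => _; [rewrite mulr1 EFinM | rewrite mulr0 mule0].
- by move=> y _; rewrite /patch; case: ifPn => _ //; rewrite lee_fin phi_ge0.
- apply/(measurable_restrictT _ _).1 => //.
  by apply/measurable_EFinP; apply: measurable_funTS; exact: measurable_phi.
Qed.

Lemma ncchi2_2_tailE (lambda c : R) :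
  ncchi2_2_tail lambda c =
  (\int[mu]_y (phi y * cond_tail c (Num.sqrt lambda) y)%:E)%E.
Proof.
rewrite /ncchi2_2_tail; set m := Num.sqrt lambda.
have msq (a : R) : measurable_fun setT (fun x : R => (x + a) ^+ 2).
  by apply: measurable_funX; exact: measurable_funD.
pose E := [set z : R * R | (c < (z.1 + m) ^+ 2 + z.2 ^+ 2)%R].
pose f (z : R * R) := (phi z.1 * phi z.2 * \1_E z)%:E.
have mf : measurable_fun setT f.
  apply/measurable_EFinP; apply: measurable_funM.
    by apply: measurable_funM; apply: measurableT_comp measurable_phi _.
  apply: measurable_indic; apply: measurable_gt_set; apply: measurable_funD.
    exact: measurableT_comp (msq m) measurable_fst.
  exact: measurable_funX measurable_snd.
have f0 z : (0 <= f z)%E by rewrite lee_fin !mulr_ge0 ?phi_ge0.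
have inner_y x : ((phi x)%:E *
    \int[mu]_(y in [set y | (c < (x + m) ^+ 2 + y ^+ 2)%R]) (phi y)%:E =
    \int[mu]_y f (x, y))%E.
  rewrite -integral_scale_phi_indic ?phi_ge0 //.
  by apply: measurable_gt_set; apply: measurable_funD.
have inner_x y : (\int[mu]_x f (x, y) = (phi y * cond_tail c m y)%:E)%E.
  rewrite EFinM -integral_phi_cond_tail -integral_scale_phi_indic ?phi_ge0 //.
    by apply: eq_integral => x _; rewrite /f /= [phi y * _]mulrC.
  by apply: measurable_gt_set; apply: measurable_funD.
under eq_integral do rewrite inner_y.
transitivity (\int[mu]_y \int[mu]_x f (x, y))%E.
  exact: (@fubini_tonelli _ _ _ _ R mu mu f mf f0).
by apply: eq_integral => y _; rewrite inner_x.
Qed.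

Lemma ncchi2_2_tail_nonpos (lambda c : R) :
  c <= 0 -> ncchi2_2_tail lambda c = 1%E.
Proof.
move=> c0; rewrite ncchi2_2_tailE -integral_phi.
by apply: eq_integral => y _; rewrite cond_tail_nonpos ?mulr1.
Qed.

Lemma measurable_phi_cond_tail (c m : R) :
  measurable_fun setT (fun y => phi y * cond_tail c m y).
Proof. exact: measurable_funM measurable_phi (measurable_cond_tail c m). Qed.

Lemma integral_phi_cond_tail_fin (c m : R) :
  (\int[mu]_y (phi y * cond_tail c m y)%:E)%E \is a fin_num.
Proof.
rewrite ge0_fin_numE; last first.
  apply: integral_ge0 => y _.
  by rewrite lee_fin mulr_ge0 ?phi_ge0 ?cond_tail_ge0.
apply: (@le_lt_trans _ _ (\int[mu]_y (2 * phi y)%:E)%E).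
  apply: ge0_le_integral => //.
  - by move=> y _; rewrite lee_fin mulr_ge0 ?phi_ge0 ?cond_tail_ge0.
  - by apply/measurable_EFinP; exact: measurable_phi_cond_tail.
  - by apply/measurable_EFinP; exact: measurable_funM _ measurable_phi.
  - by move=> y _; rewrite lee_fin mulrC ler_pM2r ?cond_tail_le2 ?phi_gt0.
under eq_integral do rewrite EFinM.
rewrite ge0_integralZl_EFin ?integral_phi ?mule1 ?ltry //.
- by move=> y _; rewrite lee_fin phi_ge0.
- by apply/measurable_EFinP; exact: measurable_phi.
Qed.

Lemma ncchi2_2_tail_lt (c lambda lambda' : R) : 0 < c -> 0 <= lambda ->
  lambda < lambda' -> (ncchi2_2_tail lambda c < ncchi2_2_tail lambda' c)%E.
Proof.
move=> c0 l0 ll'; rewrite !ncchi2_2_tailE.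
set m := Num.sqrt lambda; set m' := Num.sqrt lambda'.
have m0 : 0 <= m := sqrtr_ge0 _.
have mm' : m < m' by rewrite ltr_sqrt //; lra.
pose D y := phi y * (cond_tail c m' y - cond_tail c m y).
have mD : measurable_fun setT D.
  apply: measurable_funM; first exact: measurable_phi.
  by apply: measurable_funB; exact: measurable_cond_tail.
have D0 y : 0 <= D y by rewrite mulr_ge0 ?phi_ge0 // subr_ge0 cond_tail_le.
under [X in (_ < X)%E]eq_integral => y _.
  rewrite (_ : phi y * _ = phi y * cond_tail c m y + D y); last first.
    by rewrite /D; ring.
  rewrite EFinD; over.
rewrite ge0_integralD //; last 4 first.
- by move=> y _; rewrite lee_fin mulr_ge0 ?phi_ge0 ?cond_tail_ge0.
- by apply/measurable_EFinP; exact: measurable_phi_cond_tail.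
- by move=> y _; rewrite lee_fin.
- by apply/measurable_EFinP.
rewrite lteDl ?integral_phi_cond_tail_fin //.
have [s s0 ss] : exists2 s : R, 0 < s & s ^+ 2 = c.
  by exists (Num.sqrt c); rewrite ?sqrtr_gt0 ?sqr_sqrtr // ltW.
apply: (@integral_gt0_itv _ (- s) s mD D0); first lra.
move=> y /andP[ys ys']; rewrite mulr_gt0 ?phi_gt0 // subr_gt0 cond_tail_lt //.
by rewrite -ss; nra.
Qed.

End noncentral_chi2_tail.

Section equicorrelation.
Context {R : realType}.

Lemma ord2_cases (i : 'I_2) : i = ord0 \/ i = ord_max.
Proof. by case: i => [[|[|//]]] ?; [left | right]; apply/val_inj. Qed.

Lemma quad_form_beta2 (M : 'M[R]_2) (u v : R) :
  ((beta2 u v)^T *m M *m beta2 u v) ord0 ord0 =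
  u * u * M ord0 ord0 + u * v * M ord0 ord_max + v * u * M ord_max ord0 +
  v * v * M ord_max ord_max.
Proof.
rewrite !mxE !big_ord_recr !big_ord0 /= !mxE !big_ord_recr !big_ord0 /= !mxE /=.
have -> : widen_ord (leqnSn 1) ord_max = ord0 :> 'I_2 by apply/val_inj.
ring.
Qed.

Lemma beta2_neq0 (u v : R) : u != 0 -> beta2 u v != 0.
Proof.
apply: contraNneq => /(congr1 (fun w : 'cV_2 => w ord0 ord0)).
by rewrite !mxE /= => ->.
Qed.

Lemma SigmaE (s2 r : R) :
  [/\ Sigma s2 r ord0 ord0 = s2, Sigma s2 r ord0 ord_max = s2 * r,
      Sigma s2 r ord_max ord0 = s2 * r & Sigma s2 r ord_max ord_max = s2].
Proof. by rewrite !mxE /=; split; ring. Qed.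

Lemma posdef_Sigma_corr (s2 r : R) :
  0 < s2 -> posdef (Sigma s2 r) -> -1 < r < 1.
Proof.
move=> s0 [_ pd]; have [S00 S01 S10 S11] := SigmaE s2 r.
have := pd _ (beta2_neq0 1 1 (oner_neq0 _)).
have := pd _ (beta2_neq0 1 (-1) (oner_neq0 _)).
rewrite !quad_form_beta2 S00 S01 S10 S11 => h1 h2.
by apply/andP; split; nra.
Qed.

Lemma Sigma_inv (s2 r : R) : s2 != 0 -> 1 - r ^+ 2 != 0 ->
  invmx (Sigma s2 r) =
  (s2 * (1 - r ^+ 2))^-1 *: \matrix_(i, j) (if i == j then 1 else - r).
Proof.
move=> s0 r0; set S' := _ *: _.
suff SS' : Sigma s2 r *m S' = 1%:M.
  have [uS _] := mulmx1_unit SS'.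
  by rewrite -[invmx _]mulmx1 -SS' mulmxA mulVmx // mul1mx.
apply/matrixP => i j; rewrite !mxE !big_ord_recr !big_ord0 /= !mxE /=.
have -> : widen_ord (leqnSn 1) ord_max = ord0 :> 'I_2 by apply/val_inj.
by case: (ord2_cases i) => ->; case: (ord2_cases j) => -> /=;
  field; rewrite r0 s0.
Qed.

Lemma ncp_beta2 (n : nat) (X : 'cV[R]_n) (s2 r u v : R) :
  s2 != 0 -> 1 - r ^+ 2 != 0 ->
  ncp X (Sigma s2 r) (beta2 u v) =
  (X^T *m X) 0 0 / (s2 * (1 - r ^+ 2)) * (u ^+ 2 + v ^+ 2 - 2 * r * u * v).
Proof.
move=> s0 r0; rewrite /ncp Sigma_inv // quad_form_beta2.
set k := (X^T *m X) 0 0.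
by rewrite !mxE /=; field; rewrite r0 s0.
Qed.

Lemma trmx_mul_self_gt0 (n : nat) (X : 'cV[R]_n) :
  X != 0 -> 0 < (X^T *m X) 0 0.
Proof.
move=> X0; have -> : (X^T *m X) 0 0 = \sum_i X i 0 ^+ 2.
  by rewrite mxE; apply: eq_bigr => i _; rewrite mxE expr2.
rewrite lt_neqAle sumr_ge0 ?andbT => [|i _]; last exact: sqr_ge0.
apply: contra X0 => /eqP/esym/psumr_eq0P X0.
apply/eqP/matrixP => i j; rewrite (ord1 j) mxE.
by apply/eqP; rewrite -sqrf_eq0 X0 // => k _; exact: sqr_ge0.
Qed.

End equicorrelation.

Theorem corollary1 (R : realType) (n : nat) (X : 'cV[R]_n)
    (sigma2 rho alpha c b : R) :
  \sum_(i < n) X i ord0 = 0 ->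
  X != 0 ->
  0 < sigma2 ->
  posdef (Sigma sigma2 rho) ->
  0 < alpha < 1 ->
  ncchi2_2_tail 0 c = alpha%:E ->
  0 < b ->
  (1 / 2 < rho ->
     (asym_power c (ncp X (Sigma sigma2 rho) (beta2 b b))
      < asym_power c (ncp X (Sigma sigma2 rho) (beta2 b 0)))%E) /\
  (rho < - (1 / 2) ->
     (asym_power c (ncp X (Sigma sigma2 rho) (beta2 b (- b)))
      < asym_power c (ncp X (Sigma sigma2 rho) (beta2 b 0)))%E).
Proof.
move=> _ X0 s0 Sigma_pd /andP[_ alpha_lt1] size_c b0.
have /andP[rho_gtN1 rho_lt1] : -1 < rho < 1.
  exact: posdef_Sigma_corr Sigma_pd.
have c0 : 0 < c.
  rewrite ltNge; apply/negP => c_le0.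
  by move: size_c; rewrite ncchi2_2_tail_nonpos // => -[alpha1]; lra.
have r0 : 0 < 1 - rho ^+ 2 by nra.
have w0 : 0 < (X^T *m X) 0 0 / (sigma2 * (1 - rho ^+ 2)).
  by rewrite divr_gt0 ?mulr_gt0 ?trmx_mul_self_gt0.
rewrite /asym_power !ncp_beta2 ?gt_eqF //.
have bb : 0 < b * b by rewrite mulr_gt0.
by split=> rho_bnd; apply: ncchi2_2_tail_lt;
  rewrite ?pmulr_rge0 ?ltr_pM2l // ?sqrrN !expr2; nra.
Qed.
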